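(* Let $(X,\sigma)$ be an infinite mixing one-sided or two-sided synchronizing subshift, let $(Y,g)$ be a dynamical system, and let $\pi\colon(X,\sigma)\to(Y,g)$ be a factor map such that $\pi^{-1}(y)$ is at most countable for each $y\in Y$. Then there exist $\varepsilon>0$, $k\in\mathbb N$ and a dense Mycielski set $T\subset Y$ with $g^k(T)\subset T$ which is syndetically $\varepsilon$-scrambled for $g$.
   Context: A dynamical system $(Y,g)$: compact metric space $Y$ with continuous $g$. A factor map is a continuous surjection with $\pi\circ\sigma=g\circ\pi$. Synchronizing word $s\in L(X)$: $us,sv\in L(X)\Rightarrow usv\in L(X)$; synchronizing subshift: transitive subshift with a synchronizing word. Mixing: $\{n:\sigma^n(U)\cap V\ne\emptyset\}$ cofinite for all nonempty open $U,V$. Syndetic: subset of $\mathbb N$ meeting every set with arbitrarily long runs of consecutive integers. $\mathrm{Asy}(g)=\{(x,y):d(g^nx,g^ny)\to0\}$, $\mathrm{SProx}(g)=\{(x,y):\{n:d(g^nx,g^ny)<\eta\}$ syndetic for all $\eta>0\}$. Syndetically $\varepsilon$-scrambled set: at least two points, every distinct pair in $\mathrm{SProx}(g)\setminus\mathrm{Asy}(g)$ with $\limsup_n d(g^nx,g^ny)\ge\varepsilon$. Mycielski set: countable union of Cantor sets. *)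

From Stdlib Require Import Reals ZArith List.
Open Scope R_scope.

Record IndexSys := {
  idx : Type;
  two_sided : bool;
  isucc : idx -> idx;
  iadd : idx -> nat -> idx;
  iwin : nat -> idx -> Prop        (* the central window of radius m *)
}.

Definition NatIdx : IndexSys :=
  {| idx := nat; two_sided := false; isucc := S;
     iadd := fun i j => (i + j)%nat; iwin := fun m i => (i < m)%nat |}.

Definition ZIdx : IndexSys :=
  {| idx := Z; two_sided := true; isucc := Z.succ;
     iadd := fun i j => (i + Z.of_nat j)%Z;
     iwin := fun m i => (- Z.of_nat m <= i <= Z.of_nat m)%Z |}.

Section Shift.
Variables (S : IndexSys) (A : Type).

Definition config := idx S -> A.

Definition sshift (x : config) : config := fun i => x (isucc S i).

(** x and y agree on the window of radius m (basic cylinder neighbourhoods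
    of the product topology) *)
Definition agree (m : nat) (x y : config) : Prop :=
  forall i, iwin S m i -> x i = y i.

Definition closed_set (X : config -> Prop) : Prop :=
  forall x, (forall m, exists y, X y /\ agree m x y) -> X x.

(** subshift: closed and sshift-invariant (sigma(X) c X one-sided,
    sigma(X) = X two-sided) *)
Definition subshift (X : config -> Prop) : Prop :=
  closed_set X /\ (forall x, X x -> X (sshift x)) /\
  (two_sided S = true -> forall x, X x -> exists y, X y /\ sshift y = x).

Definition rel_open (X U : config -> Prop) : Prop :=
  (forall x, U x -> X x) /\
  (forall x, U x -> exists m, forall y, X y -> agree m x y -> U y).

Definition transitive (X : config -> Prop) : Prop :=
  forall U V, rel_open X U -> rel_open X V -> (exists u, U u) -> (exists v, V v) ->
    exists n, exists x, U x /\ V (Nat.iter n sshift x).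

Definition mixing (X : config -> Prop) : Prop :=
  forall U V, rel_open X U -> rel_open X V -> (exists u, U u) -> (exists v, V v) ->
    exists N, forall n, (N <= n)%nat -> exists x, U x /\ V (Nat.iter n sshift x).

Definition occurs (w : list A) (x : config) : Prop :=
  exists i, forall j, (j < length w)%nat -> nth_error w j = Some (x (iadd S i j)).

Definition lang (X : config -> Prop) (w : list A) : Prop :=
  exists x, X x /\ occurs w x.

Definition synchronizing_word (X : config -> Prop) (s : list A) : Prop :=
  lang X s /\
  forall u v, lang X (u ++ s) -> lang X (s ++ v) -> lang X (u ++ s ++ v).

Definition synchronizing_subshift (X : config -> Prop) : Prop :=
  subshift X /\ transitive X /\ exists s, synchronizing_word X s.

Definition infinite_set (X : config -> Prop) : Prop :=
  ~ exists l : list config, forall x, X x -> In x l.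

End Shift.

Arguments sshift {S A}.
Arguments agree {S A}.

Section Metric.
Variables (Y : Type) (d : Y -> Y -> R).

Definition metric : Prop :=
  (forall x y, 0 <= d x y) /\ (forall x y, d x y = 0 <-> x = y) /\
  (forall x y, d x y = d y x) /\ (forall x y z, d x z <= d x y + d y z).

Definition compact_metric_space : Prop :=
  metric /\
  forall u : nat -> Y, exists (phi : nat -> nat) (l : Y),
    (forall n, (phi n < phi (S n))%nat) /\
    Un_cv (fun n => d (u (phi n)) l) 0.

Definition continuous_map (g : Y -> Y) : Prop :=
  forall x eps, 0 < eps -> exists delta, 0 < delta /\
    forall y, d x y < delta -> d (g x) (g y) < eps.

Definition dense (T : Y -> Prop) : Prop :=
  forall y eps, 0 < eps -> exists t, T t /\ d y t < eps.

(** Cantor set: homeomorphic image of the Cantor space {0,1}^N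
    (a continuous injection from a compact space into a metric space is a
    homeomorphism onto its image) *)
Definition cantor_set (C : Y -> Prop) : Prop :=
  exists f : (nat -> bool) -> Y,
    (forall p eps, 0 < eps -> exists m, forall q,
        (forall i, (i < m)%nat -> p i = q i) -> d (f p) (f q) < eps) /\
    (forall p q, f p = f q -> p = q) /\
    (forall y, C y <-> exists p, f p = y).

Definition mycielski (T : Y -> Prop) : Prop :=
  exists C : nat -> Y -> Prop,
    (forall n, cantor_set (C n)) /\ (forall y, T y <-> exists n, C n y).

Definition thick (Q : nat -> Prop) : Prop :=
  forall L, exists a, forall j, (j < L)%nat -> Q (a + j)%nat.

Definition syndetic (P : nat -> Prop) : Prop :=
  forall Q, thick Q -> exists n, Q n /\ P n.

Definition asymptotic (g : Y -> Y) (x y : Y) : Prop :=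
  Un_cv (fun n => d (Nat.iter n g x) (Nat.iter n g y)) 0.

Definition synd_proximal (g : Y -> Y) (x y : Y) : Prop :=
  forall eta, 0 < eta -> syndetic (fun n => d (Nat.iter n g x) (Nat.iter n g y) < eta).

Definition limsup_ge (g : Y -> Y) (eps : R) (x y : Y) : Prop :=
  forall delta, 0 < delta -> forall N, exists n, (N <= n)%nat /\
    eps - delta < d (Nat.iter n g x) (Nat.iter n g y).

Definition synd_scrambled (g : Y -> Y) (eps : R) (T : Y -> Prop) : Prop :=
  (exists x y, T x /\ T y /\ x <> y) /\
  forall x y, T x -> T y -> x <> y ->
    synd_proximal g x y /\ ~ asymptotic g x y /\ limsup_ge g eps x y.

End Metric.

Definition sys_of (b : bool) : IndexSys := if b then ZIdx else NatIdx.

From Stdlib Require Import Reals ZArith List.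
From Stdlib Require Import Arith Lia Lra Classical ClassicalEpsilon FunctionalExtensionality Cantor.
Import ListNotations.
Open Scope nat_scope.

(** Using the synchronizing word [s], words of the form
    [s ++ r] that can be followed by [s] ("[s]-blocks") can be concatenated
    freely inside [X].  Since [X] is infinite and the fibres of [pi] are
    countable, [pi] is not constant; so there are two [s]-blocks [b0], [b1]
    of a common length [L] whose occurrences force the image under [pi] to be
    near two points [a0], [a1] at distance [>= 3 eps] ([separating_blocks]).
    For every admissible prefix [W_i] and every [p : nat -> bool] we build a
    point of [X] reading [W_i] followed by [b0]/[b1] blocks chosen by a sparse
    binary code of [(i, p)].  The images of these points and of their shifts
    by multiples of [L] form the set [T]:
    - codes of distinct parameters disagree infinitely often, so distinct
      points of [T] are [eps]-apart infinitely often (not asymptotic);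
    - codes vanish on syndetic long runs, where every point follows the
      periodic point [b0^Z], giving syndetic proximality;
    - for fixed [(i, j)], [p |-> pi(...)] is a Cantor set, so [T] is Mycielski;
    - every central window occurs in some prefix [W_i], so [T] is dense;
    - [g^L] maps [T] into itself. *)

(** * A sparse binary code for pairs (i, p), i : nat, p : nat -> bool

    [code i p u] is [false] unless [u = 2^n] with [n] the Cantor code of
    [(i, (e, l))]: then it is [true] when [e = 0] (a marker of index [i])
    and [p k] when [e = k + 1]. *)

Definition is_pow2 (u : nat) : bool := Nat.eqb u (2 ^ Nat.log2 u).

Definition code (i : nat) (p : nat -> bool) (u : nat) : bool :=
  if is_pow2 u then
    let n := Nat.log2 u in
    if Nat.eqb (fst (Cantor.of_nat n)) i then
      match fst (Cantor.of_nat (snd (Cantor.of_nat n))) with 0 => true | S k => p k end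
    else false
  else false.

Lemma log2_pow2 n : Nat.log2 (2 ^ n) = n.
Proof. apply Nat.log2_pow2; lia. Qed.

Lemma is_pow2_pow2 n : is_pow2 (2 ^ n) = true.
Proof. unfold is_pow2. rewrite log2_pow2. apply Nat.eqb_refl. Qed.

Lemma is_pow2_spec u : is_pow2 u = true -> u = 2 ^ Nat.log2 u.
Proof. unfold is_pow2. apply Nat.eqb_eq. Qed.

Lemma pow2_gt n : n < 2 ^ n.
Proof. apply Nat.pow_gt_lin_r; lia. Qed.

Lemma pow2_lt_iff a b : 2 ^ a < 2 ^ b <-> a < b.
Proof. symmetry. apply Nat.pow_lt_mono_r_iff; lia. Qed.

Lemma not_pow2_between v n : 2 ^ n < v -> v < 2 ^ S n -> is_pow2 v = false.
Proof.
  intros H1 H2. destruct (is_pow2 v) eqn:E; auto. apply is_pow2_spec in E.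
  rewrite E in H1, H2. apply (proj1 (pow2_lt_iff _ _)) in H1. apply (proj1 (pow2_lt_iff _ _)) in H2. lia.
Qed.

Lemma code_not_pow2 i p u : is_pow2 u = false -> code i p u = false.
Proof. unfold code; intros H; rewrite H; auto. Qed.

Lemma code_marker i p l : code i p (2 ^ Cantor.to_nat (i, Cantor.to_nat (0, l))) = true.
Proof.
  unfold code. rewrite is_pow2_pow2, log2_pow2, cancel_of_to. cbn [fst snd].
  rewrite Nat.eqb_refl, cancel_of_to. auto.
Qed.

Lemma code_bit i p k l : code i p (2 ^ Cantor.to_nat (i, Cantor.to_nat (S k, l))) = p k.
Proof.
  unfold code. rewrite is_pow2_pow2, log2_pow2, cancel_of_to. cbn [fst snd].
  rewrite Nat.eqb_refl, cancel_of_to. auto.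
Qed.

Lemma code_other_index i i' p y : i <> i' -> code i' p (2 ^ Cantor.to_nat (i, y)) = false.
Proof.
  intros H. unfold code. rewrite is_pow2_pow2, log2_pow2, cancel_of_to. cbn [fst snd].
  destruct (Nat.eqb_spec i i'); auto; lia.
Qed.

Lemma cantor_of_nat_le n : fst (Cantor.of_nat n) <= n /\ snd (Cantor.of_nat n) <= n.
Proof.
  pose proof (to_nat_non_decreasing (fst (Cantor.of_nat n)) (snd (Cantor.of_nat n))) as H.
  rewrite <- surjective_pairing, cancel_to_of in H. lia.
Qed.

Lemma code_local i p q u : (forall k, k < u -> p k = q k) -> code i p u = code i q u.
Proof.
  intros H. unfold code. destruct (is_pow2 u) eqn:E; auto.
  destruct (Nat.eqb _ i); auto.
  apply is_pow2_spec in E. set (n := Nat.log2 u) in *.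
  destruct (cantor_of_nat_le n) as [_ H1].
  destruct (cantor_of_nat_le (snd (Cantor.of_nat n))) as [H2 _].
  pose proof (pow2_gt n).
  destruct (fst (Cantor.of_nat (snd (Cantor.of_nat n)))) eqn:E2; auto. apply H. lia.
Qed.

Lemma large_marker i N : exists n, N < 2 ^ n /\ 2 <= n /\ N < n /\
  forall p, code i p (2 ^ n) = true /\ forall i', i <> i' -> code i' p (2 ^ n) = false.
Proof.
  exists (Cantor.to_nat (i, Cantor.to_nat (0, N + 2))).
  pose proof (to_nat_non_decreasing 0 (N + 2)).
  pose proof (to_nat_non_decreasing i (Cantor.to_nat (0, N + 2))).
  pose proof (pow2_gt (Cantor.to_nat (i, Cantor.to_nat (0, N + 2)))).
  repeat split; try lia.
  - apply code_marker.
  - intros i' Hi. apply code_other_index; auto.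
Qed.

(** Codes of [p] and [p'] differ at the position coding a bit where they differ. *)
Lemma code_separation_bits i p p' e k : p k <> p' k ->
  forall N, exists K, N <= K /\ code i p (K + e) <> code i p' (K + e).
Proof.
  intros Hk N. set (n := Cantor.to_nat (i, Cantor.to_nat (S k, N + e))).
  assert (N + e < 2 ^ n).
  { pose proof (to_nat_non_decreasing (S k) (N + e)).
    pose proof (to_nat_non_decreasing i (Cantor.to_nat (S k, N + e))).
    pose proof (pow2_gt n). unfold n in *; lia. }
  exists (2 ^ n - e). split; [lia|]. replace (2 ^ n - e + e) with (2 ^ n) by lia.
  unfold n. rewrite !code_bit. auto.
Qed.

(** A marker of index [i] is read as [false] by any other index. *)
Lemma code_separation_index i i' p p' e : i <> i' ->
  forall N, exists K, N <= K /\ code i p (K + e) <> code i' p' (K + e).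
Proof.
  intros Hi N. destruct (large_marker i (N + e)) as [n [Hn [_ [_ Hm]]]].
  exists (2 ^ n - e). split; [lia|]. replace (2 ^ n - e + e) with (2 ^ n) by lia.
  destruct (Hm p) as [-> _]. destruct (Hm p') as [_ ->]; auto. discriminate.
Qed.

(** A marker read at offset [e1] faces a non-power of two at offset [e2]. *)
Lemma code_separation_offset i i' p p' e1 e2 : e1 <> e2 ->
  forall N, exists K, N <= K /\ code i p (K + e1) <> code i' p' (K + e2).
Proof.
  intros He N. destruct (large_marker i (N + 2 * (e1 + e2) + 2)) as [n [H1 [H2 [H3 Hm]]]].
  exists (2 ^ n - e1). split; [lia|].
  replace (2 ^ n - e1 + e1) with (2 ^ n) by lia. destruct (Hm p) as [-> _].
  rewrite code_not_pow2; [discriminate|].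
  destruct (Nat.lt_ge_cases e1 e2).
  - apply not_pow2_between with n; simpl; lia.
  - destruct n as [|n']; [lia|]. apply not_pow2_between with n'.
    + simpl in H1 |- *. pose proof (pow2_gt n'). lia.
    + simpl in *. lia.
Qed.

Lemma code_separation i p e1 i' p' e2 : (e1 <> e2 \/ i <> i' \/ exists k, p k <> p' k) ->
  forall N, exists K, N <= K /\ code i p (K + e1) <> code i' p' (K + e2).
Proof.
  intros Hd. destruct (Nat.eq_dec e1 e2) as [<-|Ne]; [|now apply code_separation_offset].
  destruct (Nat.eq_dec i i') as [<-|Ni]; [|now apply code_separation_index].
  destruct Hd as [H|[H|[k Hk]]]; try lia. now apply code_separation_bits with k.
Qed.

(** Syndetically often there is a window of radius [R] on which all the
    codes, read at any offset [e <= E], vanish: beyond a power of two the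
    next one is far away. *)
Lemma code_gaps (E R : nat) : exists K0 G, forall K, K0 <= K -> exists K', K <= K' < K + G /\ R <= K' /\
  forall t, K' - R <= t <= K' + R -> forall i p e, e <= E -> code i p (t + e) = false.
Proof.
  set (R' := R + E). exists (4 * R' + 2 + R), (4 * R' + 2). intros K HK.
  assert (Hc : forall c, R' <= c -> (forall v, c - R' <= v <= c + R' -> is_pow2 v = false) ->
     forall t, c - R <= t <= c + R -> forall i p e, e <= E -> code i p (t + e) = false).
  { intros c Hc Hv t Ht i p e He. apply code_not_pow2, Hv. unfold R' in *. lia. }
  destruct (classic (exists v, K <= v <= K + 2 * R' /\ is_pow2 v = true)) as [[v [Hv1 Hv2]]|Hn].
  - exists (K + 3 * R' + 1). split; [lia|]. split; [unfold R' in *; lia|].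
    apply Hc; [lia|]. intros w Hw. destruct (is_pow2 w) eqn:Ew; auto. exfalso.
    apply is_pow2_spec in Hv2. apply is_pow2_spec in Ew.
    assert (Hlt : 2 ^ Nat.log2 v < 2 ^ Nat.log2 w) by lia.
    apply (proj1 (pow2_lt_iff _ _)) in Hlt.
    assert (2 ^ S (Nat.log2 v) <= 2 ^ Nat.log2 w) by (apply Nat.pow_le_mono_r; lia).
    simpl in *. lia.
  - exists (K + R'). split; [lia|]. split; [unfold R' in *; lia|].
    apply Hc; [lia|]. intros w Hw. destruct (is_pow2 w) eqn:Ew; auto. exfalso. apply Hn.
    exists w; split; auto. lia.
Qed.

Lemma cantor_diagonal {T : Type} (Psi : (nat -> bool) -> T) (read : T -> nat -> bool) :
  (forall pp k, read (Psi pp) k = pp k) -> forall f : nat -> T, exists pp, forall k, f k <> Psi pp.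
Proof.
  intros Hread f. exists (fun k => negb (read (f k) k)). intros k E.
  pose proof (Hread (fun k => negb (read (f k) k)) k) as H. rewrite <- E in H.
  destruct (read (f k) k); discriminate.
Qed.

(** * Integer coordinates on the index sets

    Both index sets embed in [Z]; a [ZCoords] record packages the embedding,
    its partial inverse and the position of the windows [iwin m], so that
    one- and two-sided shifts are handled uniformly.  A configuration is then
    described by a line [F : Z -> A]. *)

Record ZCoords (S : IndexSys) := {
  coord : idx S -> Z;
  at_coord : Z -> idx S;
  coord_succ : forall t, coord (isucc S t) = (coord t + 1)%Z;
  coord_add : forall t j, coord (iadd S t j) = (coord t + Z.of_nat j)%Z;
  at_coord_coord : forall t, at_coord (coord t) = t;
  coord_at_coord : forall z, (two_sided S = true \/ (0 <= z)%Z) -> coord (at_coord z) = z;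
  coord_nonneg : forall t, two_sided S = false -> (0 <= coord t)%Z;
  win_start : nat -> Z;
  win_start_bounds : forall m, (- Z.of_nat m <= win_start m <= 0)%Z;
  win_start_range : forall m, two_sided S = true \/ (0 <= win_start m)%Z;
  win_bounds : forall m t, iwin S m t -> (win_start m <= coord t <= Z.of_nat m)%Z;
  win_contains : forall m k, (k < m)%nat -> iwin S m (at_coord (Z.of_nat k));
  win_mono : forall m m' t, (m <= m')%nat -> iwin S m t -> iwin S m' t
}.

Definition nat_coords : ZCoords NatIdx.
Proof.
  refine {| coord := fun t : idx NatIdx => Z.of_nat t; at_coord := Z.to_nat;
            win_start := fun _ => 0%Z |};
  simpl; intros; try lia; try (right; lia).
  all: try (destruct H; [discriminate|lia]).
Defined.

Definition int_coords : ZCoords ZIdx.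
Proof.
  refine {| coord := fun t : idx ZIdx => t; at_coord := fun z : Z => (z : idx ZIdx);
            win_start := fun m => (- Z.of_nat m)%Z |};
  simpl; intros; try lia; auto.
Defined.

Definition coords_of (b : bool) : ZCoords (sys_of b) :=
  match b with true => int_coords | false => nat_coords end.

Definition word {A : Type} (F : Z -> A) (a : Z) (n : nat) : list A :=
  map (fun k => F (a + Z.of_nat k)%Z) (seq 0 n).

Section Words.
Variable A : Type.

Lemma word_length F a n : length (@word A F a n) = n.
Proof. unfold word; rewrite length_map, length_seq; auto. Qed.

Lemma word_nth F a n k : k < n -> nth_error (@word A F a n) k = Some (F (a + Z.of_nat k)%Z).
Proof.
  intro H; unfold word. rewrite nth_error_map, nth_error_seq.
  destruct (Nat.ltb_spec k n); [|lia]. reflexivity.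
Qed.

Lemma seq_shift_add n s0 m : seq (n + s0) m = map (Nat.add n) (seq s0 m).
Proof. revert s0; induction m; intros; simpl; auto. f_equal. rewrite <- IHm. f_equal. lia. Qed.

Lemma word_app F a n m : @word A F a (n + m) = word F a n ++ word F (a + Z.of_nat n) m.
Proof.
  unfold word. rewrite seq_app, map_app. f_equal.
  replace (seq (0 + n) m) with (seq (n + 0) m) by (f_equal; lia).
  rewrite seq_shift_add, map_map. apply map_ext; intros k. f_equal. lia.
Qed.

Lemma word_ext F G a b n : (forall k, k < n -> F (a + Z.of_nat k)%Z = G (b + Z.of_nat k)%Z) ->
  @word A F a n = word G b n.
Proof.
  intros H; apply nth_error_ext; intros k.
  destruct (Nat.ltb_spec k n).
  - rewrite !word_nth by auto. rewrite H; auto.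
  - rewrite !(proj2 (nth_error_None _ _)); auto; rewrite word_length; lia.
Qed.

Lemma word_of_letters F a w : (forall k, k < length w -> nth_error w k = Some (F (a + Z.of_nat k)%Z)) ->
  @word A F a (length w) = w.
Proof.
  intros H; apply nth_error_ext; intros k.
  destruct (Nat.ltb_spec k (length w)).
  - rewrite word_nth by auto. rewrite H; auto.
  - rewrite !(proj2 (nth_error_None _ _)); auto; rewrite ?word_length; lia.
Qed.

Lemma app_inv_same_length (l1 l2 l1' l2' : list A) :
  l1 ++ l2 = l1' ++ l2' -> length l1 = length l1' -> l1 = l1' /\ l2 = l2'.
Proof.
  revert l1'; induction l1; intros [|b l1'] E HL; simpl in *; try lia; auto.
  inversion E. destruct (IHl1 l1' H1 ltac:(lia)). subst; auto.
Qed.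

Lemma word_middle F a (pre u post : list A) :
  @word A F a (length (pre ++ u ++ post)) = pre ++ u ++ post ->
  word F (a + Z.of_nat (length pre)) (length u) = u.
Proof.
  rewrite !length_app, !word_app. intros E.
  apply app_inv_same_length in E as [_ E]; [|apply word_length].
  apply app_inv_same_length in E as [E _]; [exact E|apply word_length].
Qed.

End Words.
Arguments word_middle {A}.
Arguments word_length {A}.
Arguments word_nth {A}.
Arguments word_app {A}.
Arguments word_ext {A}.
Arguments word_of_letters {A}.
Arguments app_inv_same_length {A}.

Section Coordinates.
Variables (S : IndexSys) (C : ZCoords S) (A : Type).
Notation zc := (coord S C).
Notation at_z := (at_coord S C).

Definition in_range (z : Z) : Prop := two_sided S = true \/ (0 <= z)%Z.

Lemma in_range_coord t : in_range (zc t).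
Proof. unfold in_range. destruct (two_sided S) eqn:E; auto. right; apply coord_nonneg; auto. Qed.

Lemma in_range_add z k : in_range z -> (0 <= k)%Z -> in_range (z + k).
Proof. unfold in_range; intros [H|H] Hk; auto. right; lia. Qed.

Lemma in_range_nonneg z : (0 <= z)%Z -> in_range z.
Proof. right; auto. Qed.

Lemma coord_at z : in_range z -> zc (at_z z) = z.
Proof. intro H; apply coord_at_coord; auto. Qed.

Definition line (F : Z -> A) : config S A := fun t => F (zc t).
Definition window (x : config S A) (a : Z) (n : nat) : list A := word (fun z => x (at_z z)) a n.

Lemma window_length x a n : length (window x a n) = n.
Proof. apply word_length. Qed.

Lemma iter_shift_at n (x : config S A) t :
  Nat.iter n sshift x t = x (at_z (zc t + Z.of_nat n)%Z).
Proof.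
  revert t; induction n; intros t; simpl.
  - rewrite Z.add_0_r, at_coord_coord; auto.
  - unfold sshift at 1. rewrite IHn, coord_succ. f_equal. f_equal. lia.
Qed.

Lemma iter_shift_line n F : Nat.iter n sshift (line F) = line (fun z => F (z + Z.of_nat n)%Z).
Proof.
  apply functional_extensionality; intros t. rewrite iter_shift_at. unfold line.
  rewrite coord_at; auto. apply in_range_add; [apply in_range_coord|lia].
Qed.

Lemma window_line F a n : in_range a -> window (line F) a n = word F a n.
Proof.
  intros Ha. unfold window, line. apply word_ext. intros k Hk. rewrite coord_at; auto.
  apply in_range_add; auto; lia.
Qed.

Lemma window_iter n (x : config S A) a len : (0 <= a)%Z ->
  window (Nat.iter n sshift x) a len = window x (a + Z.of_nat n) len.
Proof.
  intros Ha. apply word_ext. intros k Hk. rewrite iter_shift_at.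
  rewrite coord_at by (apply in_range_nonneg; lia). f_equal. f_equal. lia.
Qed.

Lemma iadd_at i j : iadd S i j = at_z (zc i + Z.of_nat j)%Z.
Proof. rewrite <- coord_add, at_coord_coord; auto. Qed.

Definition win_depth (m : nat) : nat := Z.to_nat (- win_start S C m).
Definition central_window (x : config S A) (m : nat) : list A :=
  window x (win_start S C m) (m + win_depth m + 1).

Lemma agree_of_window m x y n : window y (Z.of_nat n) (m + win_depth m + 1) = central_window x m ->
  agree m x (Nat.iter (n + win_depth m) sshift y).
Proof.
  intros E t Ht. apply (win_bounds S C) in Ht. pose proof (win_start_bounds S C m).
  unfold central_window, win_depth, window in *.
  set (r := Z.to_nat (zc t - win_start S C m)).
  assert (Hr : r < m + Z.to_nat (- win_start S C m) + 1) by (unfold r; lia).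
  pose proof (word_nth (fun z => y (at_z z)) (Z.of_nat n) _ r Hr) as E1.
  rewrite E, word_nth in E1 by auto. injection E1 as E1.
  replace (win_start S C m + Z.of_nat r)%Z with (zc t) in E1 by (unfold r; lia).
  rewrite at_coord_coord in E1. rewrite E1, iter_shift_at. do 2 f_equal. unfold r; lia.
Qed.

Lemma agree_mono m m' (x y : config S A) : m' <= m -> agree m x y -> agree m' x y.
Proof. intros H Ha t Ht. apply Ha. apply (win_mono S C) with m'; auto. Qed.

Section Language.
Variables (X : config S A -> Prop) (HXsub : subshift S A X).
Notation lang := (lang S A X).

Lemma subshift_iter n x : X x -> X (Nat.iter n sshift x).
Proof. destruct HXsub as [_ [H _]]. induction n; simpl; auto. Qed.

Lemma subshift_preimage n x : two_sided S = true -> X x ->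
  exists y, X y /\ Nat.iter n sshift y = x.
Proof.
  destruct HXsub as [_ [_ H]]. intros T. induction n; intros Hx.
  - exists x; auto.
  - destruct IHn as [y [Hy E]]; auto. destruct (H T y Hy) as [y' [Hy' E']].
    exists y'; split; auto. simpl. rewrite <- E, <- E'.
    clear. induction n; simpl; auto. rewrite IHn; auto.
Qed.

Lemma subshift_translate x k : X x -> in_range k ->
  exists y, X y /\ forall t, y t = x (at_z (zc t + k)%Z).
Proof.
  intros Hx Hk. destruct (Z_le_gt_dec 0 k) as [Hk0|Hk0].
  - exists (Nat.iter (Z.to_nat k) sshift x); split; [apply subshift_iter; auto|].
    intros t; rewrite iter_shift_at, Z2Nat.id; auto.
  - destruct Hk as [T|Hk]; [|lia].
    destruct (subshift_preimage (Z.to_nat (-k)) x T Hx) as [y [Hy E]].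
    exists y; split; auto. intros t. rewrite <- E, iter_shift_at.
    rewrite coord_at by (left; auto). rewrite Z2Nat.id by lia.
    replace (zc t + k + - k)%Z with (zc t) by lia. rewrite at_coord_coord; auto.
Qed.

Lemma lang_window x a n : X x -> in_range a -> lang (window x a n).
Proof.
  intros Hx Ha. exists x; split; auto. exists (at_z a). intros j Hj.
  rewrite window_length in Hj. unfold window. rewrite word_nth by auto.
  rewrite iadd_at, coord_at; auto.
Qed.

Lemma lang_central_window x m : X x -> lang (central_window x m).
Proof.
  intros Hx. apply lang_window; auto. destruct (win_start_range S C m); [left|right]; auto.
Qed.

Lemma lang_at_origin u : lang u -> exists y, X y /\ window y 0 (length u) = u.
Proof.
  intros [x [Hx [i Hi]]].
  destruct (subshift_translate x (zc i) Hx (in_range_coord i)) as [y [Hy E]].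
  exists y; split; auto. apply word_of_letters. intros k Hk.
  rewrite Hi, E, iadd_at, coord_at by (auto; apply in_range_nonneg; lia).
  do 3 f_equal. lia.
Qed.

Lemma lang_app_l u v : lang (u ++ v) -> lang u.
Proof.
  intros [x [Hx [i Hi]]]. exists x; split; auto. exists i. intros j Hj.
  rewrite <- Hi by (rewrite length_app; lia). rewrite nth_error_app1; auto.
Qed.

Lemma line_in_subshift F :
  (forall m, exists a0 len, (a0 <= win_start S C m)%Z /\ (Z.of_nat m < a0 + Z.of_nat len)%Z /\
     lang (word F a0 len)) -> X (line F).
Proof.
  intros H. destruct HXsub as [Hcl _]. apply Hcl. intros m.
  destruct (H m) as [a0 [len [H1 [H2 H3]]]].
  destruct (lang_at_origin _ H3) as [y0 [Hy0 E]]. rewrite word_length in E.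
  assert (Hm := win_start_bounds S C m).
  destruct (subshift_translate y0 (- a0) Hy0) as [y [Hy Ey]]; [apply in_range_nonneg; lia|].
  exists y; split; auto. intros t Ht. apply (win_bounds S C) in Ht.
  unfold line. rewrite Ey.
  set (k := Z.to_nat (zc t - a0)).
  assert (Hk : k < len) by (unfold k; lia).
  assert (E1 := word_nth (fun z => y0 (at_z z)) 0 len k Hk).
  unfold window in E. rewrite E, word_nth in E1 by auto.
  injection E1 as E1. unfold k in E1. rewrite Z2Nat.id in E1 by lia.
  replace (a0 + (zc t - a0))%Z with (zc t) in E1 by lia. rewrite E1. reflexivity.
Qed.

Definition cylinder (u : list A) : config S A -> Prop :=
  fun y => X y /\ window y 0 (length u) = u.

Lemma cylinder_open u : rel_open S A X (cylinder u).
Proof.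
  split; [intros x [H _]; auto|].
  intros x [Hx E]. exists (length u). intros y Hy Ha. split; auto.
  transitivity (window x 0 (length u)); [|exact E].
  apply word_ext. intros k Hk. symmetry. apply Ha. apply win_contains; auto.
Qed.

Variable HXmix : mixing S A X.

Lemma mixing_bridge u v : lang u -> lang v ->
  exists N, forall n, N <= n -> exists mid, length mid = n /\ lang (u ++ mid ++ v).
Proof.
  intros Hu Hv.
  destruct (HXmix (cylinder u) (cylinder v) (cylinder_open u) (cylinder_open v)) as [N HN].
  { destruct (lang_at_origin u Hu) as [y [Hy E]]; exists y; split; auto. }
  { destruct (lang_at_origin v Hv) as [y [Hy E]]; exists y; split; auto. }
  exists N. intros n Hn. destruct (HN (length u + n)) as [x [[Hx Ex] [_ Ev]]]; [lia|].
  exists (window x (Z.of_nat (length u)) n). split; [apply window_length|].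
  assert (Hw := lang_window x 0 (length u + n + length v) Hx (in_range_nonneg 0 (Z.le_refl 0))).
  unfold window in Hw. rewrite !word_app in Hw. fold (window x 0 (length u)) in Hw.
  rewrite Ex, <- app_assoc, !Z.add_0_l in Hw.
  rewrite window_iter, Z.add_0_l in Ev by lia. unfold window in Ev.
  rewrite Ev in Hw. exact Hw.
Qed.

Variables (s : list A) (Hs : synchronizing_word S A X s).

Definition s_block (w : list A) : Prop := (exists r, w = s ++ r) /\ lang (w ++ s).

Lemma sync_concat (ws : list (list A)) :
  (forall w, In w ws -> s_block w) -> lang (concat ws ++ s).
Proof.
  induction ws as [|w ws IH]; intros H.
  - apply Hs.
  - simpl. destruct (H w (or_introl eq_refl)) as [[r E] Hw].
    assert (IH' : lang (concat ws ++ s)) by (apply IH; intros; apply H; right; auto).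
    assert (exists v, concat ws ++ s = s ++ v) as [v Ev].
    { destruct ws as [|w' ws'].
      - exists []; simpl; rewrite app_nil_r; auto.
      - destruct (H w' (or_intror (or_introl eq_refl))) as [[r' E'] _].
        exists (r' ++ concat ws' ++ s). simpl. rewrite E', !app_assoc; auto. }
    rewrite Ev in IH'. subst w.
    destruct Hs as [_ Hg]. specialize (Hg (s ++ r) v Hw IH').
    rewrite <- app_assoc, Ev. rewrite <- !app_assoc in *. auto.
Qed.

Lemma s_block_of_lang p u q : lang (s ++ p ++ u ++ q ++ s) -> s_block (s ++ p ++ u ++ q).
Proof. intros H. split; [eauto|]. rewrite <- !app_assoc. auto. Qed.

(** * Lines built from blocks of length [L]

    Given a block [bl], a word [W] of [a] blocks and a sequence of blocks
    [tau], [block_line] is the line reading [... bl bl W tau 0 tau 1 ...]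
    with [W] starting at coordinate 0.  When all these pieces are
    [s]-blocks, synchronization shows that it is a point of [X]. *)
Section Blocks.
Variables (dflt : A) (L : nat) (HL : 0 < L).
Notation LZ := (Z.of_nat L).

Definition block_of (W : list A) (k : nat) : list A := firstn L (skipn (k * L) W).

Definition block_seq (bl W : list A) (a : nat) (tau : nat -> list A) (k : Z) : list A :=
  if (k <? 0)%Z then bl
  else if Z.to_nat k <? a then block_of W (Z.to_nat k) else tau (Z.to_nat k - a).

Definition blocks_line (bt : Z -> list A) : Z -> A :=
  fun n => nth (Z.to_nat (n mod LZ)) (bt (n / LZ)%Z) dflt.

Definition block_line bl W a tau : Z -> A := blocks_line (block_seq bl W a tau).

Lemma blocks_line_at bt k r : r < L -> blocks_line bt (k * LZ + Z.of_nat r)%Z = nth r (bt k) dflt.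
Proof.
  intros Hr. unfold blocks_line.
  rewrite Z.div_add_l, Z.div_small, Z.add_0_r by lia.
  rewrite Z.add_comm, Z_mod_plus_full, Z.mod_small, Nat2Z.id by lia. auto.
Qed.

Lemma word_block bt k : length (bt k) = L -> word (blocks_line bt) (k * LZ) L = bt k.
Proof.
  intros HLk. rewrite <- HLk at 2. apply word_of_letters. intros j Hj.
  rewrite blocks_line_at by lia. apply nth_error_nth'. auto.
Qed.

Lemma word_blocks bt k n : (forall k, length (bt k) = L) ->
  word (blocks_line bt) (k * LZ) (n * L) = concat (map (fun r => bt (k + Z.of_nat r)%Z) (seq 0 n)).
Proof.
  intros HB. revert k; induction n; intros k; simpl; auto.
  rewrite word_app, word_block by auto. f_equal.
  - f_equal; lia.
  - replace (k * LZ + LZ)%Z with ((k + 1) * LZ)%Z by lia.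
    rewrite IHn, <- seq_shift, map_map. f_equal. apply map_ext. intros r. f_equal. lia.
Qed.

Lemma concat_blocks W a : length W = a * L -> concat (map (block_of W) (seq 0 a)) = W.
Proof.
  revert W; induction a; intros W HW; simpl.
  - destruct W; simpl in *; auto; lia.
  - unfold block_of at 1. simpl. rewrite <- seq_shift, map_map.
    transitivity (firstn L W ++ skipn L W); [|apply firstn_skipn]. f_equal.
    rewrite <- (IHa (skipn L W)) by (rewrite length_skipn; lia).
    f_equal. apply map_ext. intros r. unfold block_of. rewrite skipn_skipn. do 2 f_equal. lia.
Qed.

Lemma block_of_length W a k : length W = a * L -> k < a -> length (block_of W k) = L.
Proof. intros HW Hk. unfold block_of. rewrite length_firstn, length_skipn. nia. Qed.

Section BlockSeq.
Variables (bl W : list A) (a : nat) (tau : nat -> list A).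
Hypotheses (Hbl : length bl = L) (HW : length W = a * L) (Htau : forall k, length (tau k) = L).

Lemma block_seq_length k : length (block_seq bl W a tau k) = L.
Proof.
  unfold block_seq. destruct (k <? 0)%Z; auto.
  destruct (Nat.ltb_spec (Z.to_nat k) a); auto. apply block_of_length with a; auto.
Qed.

Lemma block_line_central M :
  word (block_line bl W a tau) (- Z.of_nat M * LZ) ((M + a + M) * L) =
  concat (repeat bl M) ++ W ++ concat (map tau (seq 0 M)).
Proof.
  unfold block_line. rewrite !Nat.mul_add_distr_r, !word_app, <- !app_assoc.
  rewrite word_blocks by apply block_seq_length.
  replace (- Z.of_nat M * LZ + Z.of_nat (M * L))%Z with (0 * LZ)%Z by lia.
  rewrite word_blocks by apply block_seq_length.
  replace (- Z.of_nat M * LZ + Z.of_nat (M * L + a * L))%Z with (Z.of_nat a * LZ)%Z by lia.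
  rewrite word_blocks by apply block_seq_length.
  f_equal; [|f_equal].
  - f_equal. transitivity (map (fun _ => bl) (seq 0 M)); [|rewrite map_const, length_seq; auto].
    apply map_ext_in.
    intros r Hr. apply in_seq in Hr. unfold block_seq.
    destruct (Z.ltb_spec (- Z.of_nat M + Z.of_nat r) 0); auto; lia.
  - rewrite <- (concat_blocks W a HW) at 1. f_equal. apply map_ext_in.
    intros r Hr. apply in_seq in Hr. unfold block_seq.
    destruct (Z.ltb_spec (0 + Z.of_nat r) 0); [lia|]. rewrite Z.add_0_l, Nat2Z.id.
    destruct (Nat.ltb_spec r a); auto; lia.
  - f_equal. apply map_ext_in. intros r Hr. unfold block_seq.
    destruct (Z.ltb_spec (Z.of_nat a + Z.of_nat r) 0); [lia|].
    rewrite <- Nat2Z.inj_add, Nat2Z.id. destruct (Nat.ltb_spec (a + r) a); [lia|]. f_equal; lia.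
Qed.

Lemma block_line_in_subshift : s_block bl -> s_block W -> (forall k, s_block (tau k)) ->
  X (line (block_line bl W a tau)).
Proof.
  intros Hb HWs Ht. apply line_in_subshift. intros m.
  exists (- Z.of_nat (m + 1) * LZ)%Z, ((m + 1 + a + (m + 1)) * L).
  pose proof (win_start_bounds S C m).
  split; [nia|]. split; [nia|].
  rewrite block_line_central. apply (lang_app_l _ s).
  replace ((concat (repeat bl (m + 1)) ++ W ++ concat (map tau (seq 0 (m + 1)))) ++ s) with
    (concat (repeat bl (m + 1) ++ [W] ++ map tau (seq 0 (m + 1))) ++ s)
    by (rewrite !concat_app; simpl; rewrite app_nil_r, <- !app_assoc; auto).
  apply sync_concat. intros w Hw. rewrite !in_app_iff in Hw.
  destruct Hw as [Hw|[[<-|[]]|Hw]]; auto.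
  - apply repeat_spec in Hw. subst w. auto.
  - apply in_map_iff in Hw as [r [<- _]]. auto.
Qed.

Lemma block_line_prefix q : (0 <= q < Z.of_nat (length W))%Z ->
  block_line bl W a tau q = nth (Z.to_nat q) W dflt.
Proof.
  intros Hq.
  pose proof (Z.div_mod q LZ ltac:(lia)) as Hdm.
  pose proof (Z.mod_pos_bound q LZ ltac:(lia)) as Hm.
  set (B := (q / LZ)%Z) in *. set (r := (q mod LZ)%Z) in *.
  assert (HB0 : (0 <= B)%Z) by (unfold B; apply Z.div_pos; lia).
  assert (HBa : (B < Z.of_nat a)%Z) by (rewrite HW in Hq; nia).
  unfold block_line. replace q with (B * LZ + Z.of_nat (Z.to_nat r))%Z by (rewrite Z2Nat.id; lia).
  rewrite blocks_line_at by lia.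
  unfold block_seq. destruct (Z.ltb_spec B 0); [lia|].
  destruct (Nat.ltb_spec (Z.to_nat B) a); [|lia].
  unfold block_of. rewrite nth_firstn. destruct (Nat.ltb_spec (Z.to_nat r) L); [|lia].
  rewrite nth_skipn. f_equal. lia.
Qed.

Lemma block_line_word_prefix : word (block_line bl W a tau) 0 (length W) = W.
Proof.
  apply word_of_letters. intros k Hk. rewrite block_line_prefix by lia.
  rewrite Z.add_0_l, Nat2Z.id. apply nth_error_nth'; auto.
Qed.

Lemma window_block_line k : a <= k ->
  window (line (block_line bl W a tau)) (Z.of_nat (k * L)) L = tau (k - a).
Proof.
  intros Hk. rewrite window_line by (apply in_range_nonneg; lia).
  replace (Z.of_nat (k * L)) with (Z.of_nat k * LZ)%Z by lia.
  unfold block_line. rewrite word_block by apply block_seq_length.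
  unfold block_seq. destruct (Z.ltb_spec (Z.of_nat k) 0); [lia|].
  rewrite Nat2Z.id; destruct (Nat.ltb_spec k a); [lia|]; auto.
Qed.

End BlockSeq.

Lemma block_line_periodic bl : length bl = L ->
  block_line bl bl 1 (fun _ => bl) = fun q => nth (Z.to_nat (q mod LZ)) bl dflt.
Proof.
  intros Hl. apply functional_extensionality; intros q. unfold block_line, blocks_line.
  f_equal. unfold block_seq. destruct (_ <? 0)%Z; auto.
  destruct (Nat.ltb_spec (Z.to_nat (q / LZ)) 1); auto.
  replace (Z.to_nat (q / LZ)) with 0 by lia. unfold block_of. simpl.
  rewrite firstn_all2; auto. lia.
Qed.

End Blocks.

Section Factor.
Local Open Scope R_scope.
Variables (Y : Type) (dY : Y -> Y -> R) (HYm : metric Y dY) (g : Y -> Y)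
  (pi : config S A -> Y)
  (Hpi_cont : forall x eps, X x -> 0 < eps -> exists m, forall y, X y ->
                 agree m x y -> dY (pi x) (pi y) < eps)
  (Hpi_eqv : forall x, X x -> pi (sshift x) = g (pi x)).
Hypothesis HXinf : infinite_set S A X.

Lemma factor_iter n x : X x -> pi (Nat.iter n sshift x) = Nat.iter n g (pi x).
Proof.
  induction n; intros Hx; simpl; auto.
  rewrite Hpi_eqv by (apply subshift_iter; auto). rewrite IHn; auto.
Qed.

Lemma subshift_nonempty : exists x0, X x0.
Proof. apply NNPP. intros H. apply HXinf. exists []. intros x Hx. apply H. eauto. Qed.

Lemma two_words : exists u u', lang u /\ lang u' /\ length u = length u' /\ u <> u'.
Proof.
  apply NNPP. intros H. destruct subshift_nonempty as [x0 Hx0]. apply HXinf. exists [x0].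
  intros x Hx. left. apply functional_extensionality. intros t.
  set (a := Z.min 0 (zc t)).
  assert (Ha : in_range a).
  { unfold a. destruct (Z.min_spec 0 (zc t)) as [[_ ->]|[_ ->]];
      [apply in_range_nonneg; lia|apply in_range_coord]. }
  set (n := (Z.to_nat (zc t - a) + 1)%nat).
  assert (E : window x0 a n = window x a n).
  { apply NNPP. intros Hne. apply H. exists (window x0 a n), (window x a n).
    rewrite !window_length. repeat split; auto; apply lang_window; auto. }
  assert (Hk : (Z.to_nat (zc t - a) < n)%nat) by (unfold n; lia).
  pose proof (word_nth (fun z => x0 (at_z z)) a n _ Hk) as E1.
  pose proof (word_nth (fun z => x (at_z z)) a n _ Hk) as E2.
  unfold window in E. rewrite E, E2 in E1. injection E1 as E1.
  replace (a + Z.of_nat (Z.to_nat (zc t - a)))%Z with (zc t) in E1 by (unfold a; lia).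
  rewrite at_coord_coord in E1. auto.
Qed.

Lemma framed_pair u u' : lang u -> lang u' -> exists p q p' q',
  length p = length p' /\ length q = length q' /\
  lang (s ++ p ++ u ++ q ++ s) /\ lang (s ++ p' ++ u' ++ q' ++ s).
Proof.
  intros Hu Hu'. assert (Hs0 : lang s) by apply Hs.
  destruct (mixing_bridge u s Hu Hs0) as [N1 HN1].
  destruct (mixing_bridge u' s Hu' Hs0) as [N2 HN2].
  destruct (HN1 (N1 + N2)%nat) as [q [Lq G1]]; [lia|].
  destruct (HN2 (N1 + N2)%nat) as [q' [Lq' G2]]; [lia|].
  destruct (mixing_bridge s _ Hs0 G1) as [M1 HM1].
  destruct (mixing_bridge s _ Hs0 G2) as [M2 HM2].
  destruct (HM1 (M1 + M2)%nat) as [p [Lp F1]]; [lia|].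
  destruct (HM2 (M1 + M2)%nat) as [p' [Lp' F2]]; [lia|].
  exists p, q, p', q'. repeat split; auto; lia.
Qed.

Lemma two_s_blocks : exists b0 b1, s_block b0 /\ s_block b1 /\
  length b0 = length b1 /\ (0 < length b0)%nat /\ b0 <> b1.
Proof.
  destruct two_words as [u [u' [Hu [Hu' [Hl Hne]]]]].
  destruct (framed_pair u u' Hu Hu') as [p [q [p' [q' [Lp [Lq [G1 G2]]]]]]].
  exists (s ++ p ++ u ++ q), (s ++ p' ++ u' ++ q').
  split; [apply s_block_of_lang; auto|]. split; [apply s_block_of_lang; auto|].
  rewrite !length_app. split; [lia|]. split.
  - destruct u; [destruct u'; simpl in Hl; [congruence|lia]|simpl; lia].
  - intros E. apply app_inv_head in E.
    apply app_inv_same_length in E as [_ E]; auto. apply app_inv_same_length in E as [E _]; auto.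
Qed.

(** With countable fibres the factor map is not constant on [X]: choosing
    between two [s]-blocks at every position gives uncountably many points. *)
Hypothesis Hpi_fib : forall y, exists f : nat -> config S A,
  forall x, X x -> pi x = y -> exists n, f n = x.

Lemma factor_not_constant : exists x1 x2, X x1 /\ X x2 /\ pi x1 <> pi x2.
Proof.
  destruct two_s_blocks as [b0 [b1 [Hb0 [Hb1 [Hl [HL Hne]]]]]].
  set (L := length b0).
  assert (Hdl : exists dl : A, In dl b0) by (destruct b0; [simpl in HL; lia|eexists; left; eauto]).
  destruct Hdl as [dl _].
  set (choice := fun (pp : nat -> bool) k => if pp k then b1 else b0).
  set (Psi := fun pp => line (block_line dl L b0 b0 1 (choice pp))).
  assert (HPsi : forall pp, X (Psi pp)).
  { intros pp. apply block_line_in_subshift; auto; unfold choice, L in *; try lia;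
      intros k; destruct (pp k); auto. }
  set (read := fun y k => if excluded_middle_informative
                 (window y (Z.of_nat ((k + 1) * L)) L = b1) then true else false).
  assert (Hread : forall pp k, read (Psi pp) k = pp k).
  { intros pp k. unfold read, Psi. rewrite window_block_line; auto; try lia.
    - replace (k + 1 - 1)%nat with k by lia. unfold choice.
      destruct (pp k), (excluded_middle_informative _); congruence.
    - intros k'; unfold choice; destruct (pp k'); auto. }
  destruct subshift_nonempty as [x0 Hx0]. destruct (Hpi_fib (pi x0)) as [f Hf].
  destruct (cantor_diagonal Psi read Hread f) as [pp Hpp].
  exists (Psi pp), x0. repeat split; auto. intros E.
  destruct (Hf (Psi pp) (HPsi pp) E) as [k Ek]. exact (Hpp k Ek).
Qed.

Lemma framed_window_near x m m' eps pre post : (m' <= m)%nat ->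
  (forall y, X y -> agree m' x y -> dY (pi x) (pi y) < eps) ->
  forall y n, X y ->
  window y (Z.of_nat n) (length (pre ++ central_window x m ++ post)) = pre ++ central_window x m ++ post ->
  dY (pi x) (pi (Nat.iter (n + (length pre + win_depth m)) sshift y)) < eps.
Proof.
  intros Hm Hc y n Hy E. apply Hc; [apply subshift_iter; auto|].
  apply agree_mono with m; auto. rewrite Nat.add_assoc. apply agree_of_window.
  apply word_middle in E. rewrite Nat2Z.inj_add.
  replace (m + win_depth m + 1)%nat with (length (central_window x m)) by apply window_length.
  exact E.
Qed.

Lemma separating_blocks : exists (dl : A) (a0 a1 : Y) (eps : R) (b0 b1 : list A) (L h : nat),
  0 < eps /\ 3 * eps <= dY a0 a1 /\ (0 < L)%nat /\ length b0 = L /\ length b1 = L /\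
  s_block b0 /\ s_block b1 /\
  (forall y n, X y -> window y (Z.of_nat n) L = b0 -> dY a0 (pi (Nat.iter (n + h) sshift y)) < eps) /\
  (forall y n, X y -> window y (Z.of_nat n) L = b1 -> dY a1 (pi (Nat.iter (n + h) sshift y)) < eps).
Proof.
  destruct factor_not_constant as [x1 [x2 [Hx1 [Hx2 Hne]]]].
  destruct HYm as [Hd0 [Hdeq _]].
  set (eps := dY (pi x1) (pi x2) / 3).
  assert (Heps : 0 < eps).
  { unfold eps. assert (dY (pi x1) (pi x2) <> 0) by (intro E; apply Hne; apply Hdeq; auto).
    specialize (Hd0 (pi x1) (pi x2)). lra. }
  destruct (Hpi_cont x1 eps Hx1 Heps) as [m1 Hm1].
  destruct (Hpi_cont x2 eps Hx2 Heps) as [m2 Hm2].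
  set (m := (m1 + m2)%nat).
  set (u1 := central_window x1 m). set (u2 := central_window x2 m).
  destruct (framed_pair u1 u2) as [p [q [p' [q' [Lp [Lq [G1 G2]]]]]]];
    try apply lang_central_window; auto.
  assert (Hu : length u1 = length u2) by (unfold u1, u2, central_window; rewrite !window_length; auto).
  exists (x1 (at_z 0)), (pi x1), (pi x2), eps, (s ++ p ++ u1 ++ q), (s ++ p' ++ u2 ++ q'),
    (length (s ++ p ++ u1 ++ q)), (length (s ++ p) + win_depth m)%nat.
  assert (HL : length (s ++ p' ++ u2 ++ q') = length (s ++ p ++ u1 ++ q)) by (rewrite !length_app; lia).
  repeat split; auto; try (unfold eps; lra); try (apply s_block_of_lang; auto).
  - rewrite !length_app. unfold u1, central_window. rewrite window_length. lia.
  - intros y n Hy E. apply (framed_window_near x1 m m1 eps (s ++ p) q); auto; [unfold m; lia|].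
    rewrite <- !app_assoc. exact E.
  - intros y n Hy E. rewrite length_app, Lp, <- length_app.
    apply (framed_window_near x2 m m2 eps (s ++ p') q'); auto; [unfold m; lia|].
    rewrite <- !app_assoc. fold u2. rewrite HL. exact E.
Qed.

(** * The scrambled set *)
Section Construction.
Variables (l0 : list A) (Hl0 : forall a, In a l0).
Variables (dl : A) (a0 a1 : Y) (eps : R) (b0 b1 : list A) (L h : nat).
Hypotheses (Heps : 0 < eps) (Hsep : 3 * eps <= dY a0 a1) (HL : (0 < L)%nat)
  (Hb0l : length b0 = L) (Hb1l : length b1 = L) (Hb0 : s_block b0) (Hb1 : s_block b1)
  (Hn0 : forall y n, X y -> window y (Z.of_nat n) L = b0 -> dY a0 (pi (Nat.iter (n + h) sshift y)) < eps)
  (Hn1 : forall y n, X y -> window y (Z.of_nat n) L = b1 -> dY a1 (pi (Nat.iter (n + h) sshift y)) < eps).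

(** The finite alphabet makes the words enumerable. *)
Fixpoint words_of_length (n : nat) : list (list A) :=
  match n with
  | O => [[]]
  | Datatypes.S n' => flat_map (fun a => map (cons a) (words_of_length n')) l0
  end.

Lemma in_words_of_length w : In w (words_of_length (length w)).
Proof.
  induction w as [|a w IH]; simpl; auto. apply in_flat_map. exists a; split; auto.
  apply in_map; auto.
Qed.

Definition word_enum (k : nat) : list A :=
  nth (snd (Cantor.of_nat k)) (words_of_length (fst (Cantor.of_nat k))) [].

Lemma word_enum_surj w : exists k, word_enum k = w.
Proof.
  destruct (In_nth _ _ [] (in_words_of_length w)) as [n [_ E]].
  exists (Cantor.to_nat (length w, n)). unfold word_enum. rewrite cancel_of_to. auto.
Qed.

Definition admissible (W : list A) : Prop := s_block W /\ exists a, length W = (a * L)%nat.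

(** The [i]-th admissible prefix and its number of blocks ([b0] replaces
    non-admissible words). *)
Definition prefix_word (i : nat) : list A :=
  if excluded_middle_informative (admissible (word_enum i)) then word_enum i else b0.
Definition prefix_blocks (i : nat) : nat := (length (prefix_word i) / L)%nat.

Lemma prefix_word_spec i : s_block (prefix_word i) /\ length (prefix_word i) = (prefix_blocks i * L)%nat.
Proof.
  assert (H : admissible (prefix_word i)).
  { unfold prefix_word. destruct (excluded_middle_informative _); auto.
    split; auto. exists 1%nat; lia. }
  destruct H as [H1 [a Ha]]. split; auto. unfold prefix_blocks. rewrite Ha, Nat.div_mul by lia. auto.
Qed.

Lemma prefix_word_enum W : admissible W -> exists i, prefix_word i = W.
Proof.
  intros HW. destruct (word_enum_surj W) as [i Ei]. exists i.
  unfold prefix_word. rewrite Ei. destruct (excluded_middle_informative _); tauto.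
Qed.

Definition coded_block (i : nat) (p : nat -> bool) (k : nat) : list A := if code i p k then b1 else b0.

Lemma coded_block_spec i p k : s_block (coded_block i p k) /\ length (coded_block i p k) = L.
Proof. unfold coded_block; destruct (code i p k); auto. Qed.

Definition coded_line (i : nat) (p : nat -> bool) : Z -> A :=
  block_line dl L b0 (prefix_word i) (prefix_blocks i) (coded_block i p).

Definition orbit_point (i : nat) (p : nat -> bool) (j : nat) : config S A :=
  Nat.iter (j * L) sshift (line (coded_line i p)).

Lemma coded_line_in_X i p : X (line (coded_line i p)).
Proof.
  destruct (prefix_word_spec i). apply block_line_in_subshift; auto; apply coded_block_spec.
Qed.

Lemma orbit_point_in_X i p j : X (orbit_point i p j).
Proof. apply subshift_iter, coded_line_in_X. Qed.

Lemma orbit_point_iter n i p j :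
  Nat.iter n sshift (orbit_point i p j) = line (fun q => coded_line i p (q + Z.of_nat (n + j * L))%Z).
Proof. unfold orbit_point. rewrite <- Nat.iter_add. apply iter_shift_line. Qed.

Lemma orbit_point_at i p j t : orbit_point i p j t = coded_line i p (zc t + Z.of_nat (j * L))%Z.
Proof. change (orbit_point i p j) with (Nat.iter 0 sshift (orbit_point i p j)). rewrite orbit_point_iter. auto. Qed.

Lemma window_orbit_point i p j k : (prefix_blocks i <= k)%nat ->
  window (orbit_point i p j) (Z.of_nat (k * L)) L = coded_block i p (k + j - prefix_blocks i).
Proof.
  intros Hk. unfold orbit_point. rewrite window_iter by lia.
  replace (Z.of_nat (k * L) + Z.of_nat (j * L))%Z with (Z.of_nat ((k + j) * L)) by lia.
  destruct (prefix_word_spec i). unfold coded_line. rewrite window_block_line; auto; [|lia].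
  apply coded_block_spec.
Qed.

Lemma far_apart u v : dY a0 u < eps -> dY a1 v < eps -> eps < dY u v.
Proof.
  intros H1 H2. destruct HYm as [_ [_ [Hsym Htri]]].
  pose proof (Htri a0 u a1). pose proof (Htri u v a1). rewrite (Hsym v a1) in *. lra.
Qed.

Lemma near_at_block_time i p j k : (prefix_blocks i <= k)%nat ->
  (if code i p (k + j - prefix_blocks i) then dY a1 else dY a0)
    (Nat.iter (k * L + h) g (pi (orbit_point i p j))) < eps.
Proof.
  intros Hk. rewrite <- factor_iter by apply orbit_point_in_X.
  pose proof (window_orbit_point i p j k Hk) as E. unfold coded_block in E.
  destruct (code i p (k + j - prefix_blocks i)).
  - apply Hn1; auto. apply orbit_point_in_X.
  - apply Hn0; auto. apply orbit_point_in_X.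
Qed.

Lemma orbit_points_separate i p j i' p' j' : ~ (i = i' /\ j = j' /\ forall k, p k = p' k) ->
  forall N, exists n, (N <= n)%nat /\
    eps < dY (Nat.iter n g (pi (orbit_point i p j))) (Nat.iter n g (pi (orbit_point i' p' j'))).
Proof.
  intros Hne N. set (ai := prefix_blocks i). set (ai' := prefix_blocks i').
  assert (Hd : ((ai' + j) <> (ai + j'))%nat \/ i <> i' \/ exists k, p k <> p' k).
  { destruct (Nat.eq_dec i i') as [<-|Ni]; [|right; left; auto].
    destruct (Nat.eq_dec j j') as [<-|Nj]; [|left; unfold ai, ai'; lia].
    right; right. apply NNPP. intros Hn. apply Hne. repeat split; auto.
    intros k. apply NNPP. intros Hk. apply Hn. eauto. }
  destruct (code_separation i p (ai' + j) i' p' (ai + j') Hd N) as [K [HK Hcode]].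
  set (k := (K + ai + ai')%nat).
  exists (k * L + h)%nat. split; [unfold k; nia|].
  pose proof (near_at_block_time i p j k ltac:(unfold k, ai; lia)) as N1.
  pose proof (near_at_block_time i' p' j' k ltac:(unfold k, ai'; lia)) as N2.
  fold ai in N1. fold ai' in N2.
  replace (k + j - ai)%nat with (K + (ai' + j))%nat in N1 by (unfold k; lia).
  replace (k + j' - ai')%nat with (K + (ai + j'))%nat in N2 by (unfold k; lia).
  destruct (code i p (K + (ai' + j))), (code i' p' (K + (ai + j'))); try congruence.
  - destruct HYm as [_ [_ [Hsym _]]]. rewrite Hsym. apply far_apart; auto.
  - apply far_apart; auto.
Qed.

(** The periodic point [b0^Z]: on long runs where the codes vanish, every
    orbit point reads only [b0] blocks and is close to it. *)
Definition periodic_line (q : Z) : A := nth (Z.to_nat (q mod Z.of_nat L)) b0 dl.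

Lemma periodic_in_X : X (line periodic_line).
Proof.
  unfold periodic_line. rewrite <- block_line_periodic by auto.
  apply block_line_in_subshift; auto. lia.
Qed.

Lemma periodic_line_shift q c : periodic_line (q + Z.of_nat (c * L)) = periodic_line q.
Proof.
  unfold periodic_line. do 2 f_equal.
  replace (Z.of_nat (c * L)) with (Z.of_nat c * Z.of_nat L)%Z by lia. apply Z_mod_plus_full.
Qed.

Lemma div_bounds (r : Z) (m : nat) : (- Z.of_nat m <= r <= Z.of_nat m)%Z ->
  (- Z.of_nat m <= r / Z.of_nat L <= Z.of_nat m)%Z.
Proof.
  intros H. pose proof (Z.div_mod r (Z.of_nat L) ltac:(lia)).
  pose proof (Z.mod_pos_bound r (Z.of_nat L) ltac:(lia)). nia.
Qed.

Lemma agree_periodic ms i p j kk : (prefix_blocks i + ms <= kk + j)%nat ->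
  (forall dd, (- Z.of_nat ms <= dd <= Z.of_nat ms)%Z ->
     code i p (Z.to_nat (Z.of_nat (kk + j) + dd) - prefix_blocks i) = false) ->
  agree ms (line periodic_line) (Nat.iter (kk * L) sshift (orbit_point i p j)).
Proof.
  intros Hk Hc t Ht. apply (win_bounds S C) in Ht. pose proof (win_start_bounds S C ms).
  rewrite orbit_point_iter. unfold line.
  set (r := zc t) in *.
  set (Q := (r + Z.of_nat (kk * L + j * L))%Z).
  assert (EB : (Q / Z.of_nat L = Z.of_nat (kk + j) + r / Z.of_nat L)%Z).
  { replace Q with (Z.of_nat (kk + j) * Z.of_nat L + r)%Z by (unfold Q; lia).
    apply Z.div_add_l. lia. }
  pose proof (div_bounds r ms ltac:(lia)) as Hdb.
  unfold coded_line, block_line, blocks_line. fold Q. rewrite EB.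
  unfold block_seq. destruct (Z.ltb_spec (Z.of_nat (kk + j) + r / Z.of_nat L) 0); [lia|].
  destruct (Nat.ltb_spec (Z.to_nat (Z.of_nat (kk + j) + r / Z.of_nat L)) (prefix_blocks i)); [lia|].
  unfold coded_block. rewrite Hc by auto.
  fold (periodic_line Q). unfold Q. replace (kk * L + j * L)%nat with ((kk + j) * L)%nat by lia.
  rewrite periodic_line_shift. auto.
Qed.

(** Any two images are syndetically proximal: both approach [pi b0^Z]
    during the gaps of the codes, which occur syndetically. *)
Lemma orbit_points_syndetically_proximal i p j i' p' j' eta : 0 < eta ->
  syndetic (fun n => dY (Nat.iter n g (pi (orbit_point i p j))) (Nat.iter n g (pi (orbit_point i' p' j'))) < eta).
Proof.
  intros Heta. destruct HYm as [_ [_ [Hsym Htri]]].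
  set (ai := prefix_blocks i). set (ai' := prefix_blocks i').
  destruct (Hpi_cont (line periodic_line) (eta / 2) periodic_in_X ltac:(lra)) as [ms Hms].
  destruct (code_gaps (ai' + j + (ai + j')) ms) as [K0 [G HSY]].
  intros Q HQ. set (B := (ai + ai')%nat).
  destruct (HQ ((K0 + B + G + 2) * L)%nat) as [a Ha].
  destruct (HSY (a / L + 1 + K0)%nat ltac:(lia)) as [K' [HK1 [HK2 Hz]]].
  set (n := ((K' + B) * L)%nat).
  pose proof (Nat.div_mod a L ltac:(lia)). pose proof (Nat.mod_upper_bound a L ltac:(lia)).
  exists n. split.
  { replace n with (a + (n - a))%nat by (unfold n in *; nia). apply Ha. unfold n in *; nia. }
  assert (Near : forall ii pp jj e, (e <= ai' + j + (ai + j'))%nat ->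
     (K' + B + jj = prefix_blocks ii + K' + e)%nat ->
     dY (pi (line periodic_line)) (Nat.iter n g (pi (orbit_point ii pp jj))) < eta / 2).
  { intros ii pp jj e He Hjj. rewrite <- factor_iter by apply orbit_point_in_X.
    apply Hms; [apply subshift_iter, orbit_point_in_X|].
    apply agree_periodic; [lia|]. intros dd Hdd.
    replace (Z.to_nat (Z.of_nat (K' + B + jj) + dd) - prefix_blocks ii)%nat
      with (Z.to_nat (Z.of_nat K' + dd) + e)%nat by lia.
    apply Hz; auto. lia. }
  pose proof (Near i p j (ai' + j)%nat ltac:(lia) ltac:(unfold B, ai; lia)).
  pose proof (Near i' p' j' (ai + j')%nat ltac:(lia) ltac:(unfold B, ai'; lia)).
  pose proof (Htri (Nat.iter n g (pi (orbit_point i p j))) (pi (line periodic_line))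
                   (Nat.iter n g (pi (orbit_point i' p' j')))) as T.
  rewrite (Hsym _ (pi (line periodic_line))) in T. lra.
Qed.

Lemma coded_line_local i p q M Q : (forall k, (k < M)%nat -> p k = q k) -> (Q < Z.of_nat M)%Z ->
  coded_line i p Q = coded_line i q Q.
Proof.
  intros H HQ. unfold coded_line, block_line, blocks_line. f_equal. unfold block_seq.
  destruct (Z.ltb_spec (Q / Z.of_nat L) 0); auto.
  destruct (Nat.ltb_spec (Z.to_nat (Q / Z.of_nat L)) (prefix_blocks i)); auto.
  unfold coded_block. rewrite (code_local i p q); auto.
  intros k Hk. apply H.
  assert (HQ0 : (0 <= Q)%Z).
  { destruct (Z_lt_le_dec Q 0); auto.
    assert (Q / Z.of_nat L < 0)%Z by (apply Z.div_lt_upper_bound; lia). lia. }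
  assert (Q / Z.of_nat L <= Q)%Z by (apply Z.div_le_upper_bound; nia). lia.
Qed.

Lemma orbit_cantor_set i j : cantor_set Y dY (fun y => exists p, pi (orbit_point i p j) = y).
Proof.
  exists (fun p => pi (orbit_point i p j)). split; [|split].
  - intros p e He. destruct (Hpi_cont (orbit_point i p j) e (orbit_point_in_X i p j) He) as [m Hm].
    exists (m + j * L + 1)%nat. intros q Hq. apply Hm; [apply orbit_point_in_X|].
    intros t Ht. apply (win_bounds S C) in Ht. rewrite !orbit_point_at.
    apply coded_line_local with (m + j * L + 1)%nat; auto. lia.
  - intros p q E. apply functional_extensionality. intros k. apply NNPP. intros Hk.
    destruct (orbit_points_separate i p j i q j ltac:(intros [_ [_ H]]; apply Hk; auto) 0)
      as [n [_ Hn]].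
    rewrite E in Hn. destruct HYm as [_ [Hdeq _]]. rewrite (proj2 (Hdeq _ _) eq_refl) in Hn. lra.
  - intros y; split; auto.
Qed.

Definition scrambled_set (y : Y) : Prop := exists i p j, y = pi (orbit_point i p j).

Lemma scrambled_set_mycielski : mycielski Y dY scrambled_set.
Proof.
  exists (fun n y => exists p, pi (orbit_point (fst (Cantor.of_nat n)) p (snd (Cantor.of_nat n))) = y).
  split; [intros n; apply orbit_cantor_set|].
  intros y; split.
  - intros [i [p [j E]]]. exists (Cantor.to_nat (i, j)). rewrite cancel_of_to. simpl. eauto.
  - intros [n [p E]]. exists (fst (Cantor.of_nat n)), p, (snd (Cantor.of_nat n)). auto.
Qed.

(** [g^L] maps [T] into itself: it increments [j]. *)
Lemma scrambled_set_invariant y : scrambled_set y -> scrambled_set (Nat.iter L g y).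
Proof.
  intros [i [p [j ->]]]. exists i, p, (Datatypes.S j).
  rewrite <- factor_iter by apply orbit_point_in_X. unfold orbit_point.
  rewrite <- Nat.iter_add. do 2 f_equal.
Qed.

Lemma scrambled_set_scrambled : synd_scrambled Y dY g eps scrambled_set.
Proof.
  destruct HYm as [_ [Hdeq _]]. split.
  - exists (pi (orbit_point 0 (fun _ => false) 0)), (pi (orbit_point 0 (fun _ => true) 0)).
    split; [exists 0%nat, (fun _ => false), 0%nat; auto|].
    split; [exists 0%nat, (fun _ => true), 0%nat; auto|].
    intros E. destruct (orbit_points_separate 0 (fun _ => false) 0 0 (fun _ => true) 0
      ltac:(intros [_ [_ H]]; discriminate (H 0%nat)) 0) as [n [_ Hn]].
    rewrite E, (proj2 (Hdeq _ _) eq_refl) in Hn. lra.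
  - intros x y [i [p [j ->]]] [i' [p' [j' ->]]] Hne.
    assert (Hpar : ~ (i = i' /\ j = j' /\ forall k, p k = p' k)).
    { intros [<- [<- E3]]. apply Hne. do 2 f_equal. apply functional_extensionality; auto. }
    split; [|split].
    + intros eta Heta. apply orbit_points_syndetically_proximal; auto.
    + intros Hcv. destruct (Hcv eps Heps) as [N HN].
      destruct (orbit_points_separate i p j i' p' j' Hpar N) as [n [Hq1 Hq2]].
      specialize (HN n Hq1). unfold R_dist in HN. rewrite Rminus_0_r, Rabs_right in HN by lra. lra.
    + intros delta Hdelta N. destruct (orbit_points_separate i p j i' p' j' Hpar N) as [n [Hq1 Hq2]].
      exists n; split; auto. lra.
Qed.

Lemma padded_s_block v c : lang v -> (c <= length v)%nat -> exists pre post alpha a,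
  s_block (pre ++ v ++ post) /\ length (pre ++ v ++ post) = (a * L)%nat /\
  (length pre + c = alpha * L)%nat.
Proof.
  intros Hv Hc. assert (Hs0 : lang s) by apply Hs.
  destruct (mixing_bridge v s Hv Hs0) as [N2 HN2].
  destruct (HN2 (L * (N2 + length v + 1) + c - length v)%nat ltac:(nia)) as [q [Lq Gq]].
  destruct (mixing_bridge s (v ++ q ++ s) Hs0 Gq) as [N1 HN1].
  destruct (HN1 (L * (N1 + length s + c + 1) - length s - c)%nat ltac:(nia)) as [p [Lp Gp]].
  exists (s ++ p), q, (N1 + length s + c + 1)%nat, (N1 + length s + c + 1 + (N2 + length v + 1))%nat.
  rewrite <- app_assoc. split; [apply s_block_of_lang; auto|].
  rewrite !length_app, Lp, Lq. split; nia.
Qed.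

Hypothesis Hpi_surj : forall y, exists x, X x /\ pi x = y.

(** Density: a central window of any point is the prefix of some orbit point. *)
Lemma scrambled_set_dense : dense Y dY scrambled_set.
Proof.
  intros y0 e He. destruct (Hpi_surj y0) as [x [Hx <-]].
  destruct (Hpi_cont x e Hx He) as [m Hm].
  set (v := central_window x m).
  assert (Hv : length v = (m + win_depth m + 1)%nat) by apply window_length.
  destruct (padded_s_block v (win_depth m)) as [pre [post [alpha [a [HW [HWl Hpre]]]]]];
    [apply lang_central_window; auto|lia|].
  destruct (prefix_word_enum (pre ++ v ++ post)) as [i0 EW]; [split; eauto|].
  exists (pi (orbit_point i0 (fun _ => false) alpha)). split; [exists i0, (fun _ => false), alpha; auto|].
  apply Hm; [apply orbit_point_in_X|].
  unfold orbit_point. rewrite <- Hpre. apply agree_of_window. fold v. rewrite <- Hv.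
  rewrite window_line by (apply in_range_nonneg; lia).
  pose proof (block_line_word_prefix dl L HL b0 (prefix_word i0) (prefix_blocks i0)
    (coded_block i0 (fun _ => false))) as E.
  unfold coded_line. rewrite EW in E |- *. apply word_middle in E. rewrite Z.add_0_l in E. exact E.
  - exact Hb0l.
  - rewrite <- EW. apply prefix_word_spec.
Qed.

Lemma scrambled_set_properties : exists (eps' : R) (k : nat) (T : Y -> Prop),
  0 < eps' /\ (1 <= k)%nat /\ dense Y dY T /\ mycielski Y dY T /\
  (forall y, T y -> T (Nat.iter k g y)) /\ synd_scrambled Y dY g eps' T.
Proof.
  exists eps, L, scrambled_set.
  split; [exact Heps|]. split; [lia|].
  split; [apply scrambled_set_dense|]. split; [apply scrambled_set_mycielski|].
  split; [apply scrambled_set_invariant|apply scrambled_set_scrambled].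
Qed.

End Construction.

Lemma factor_has_scrambled_set (Hfin : exists l : list A, forall a, In a l)
  (Hpi_surj : forall y, exists x, X x /\ pi x = y) :
  exists (eps : R) (k : nat) (T : Y -> Prop),
    0 < eps /\ (1 <= k)%nat /\ dense Y dY T /\ mycielski Y dY T /\
    (forall y, T y -> T (Nat.iter k g y)) /\ synd_scrambled Y dY g eps T.
Proof.
  destruct Hfin as [l0 Hl0].
  destruct separating_blocks as [dl [a0 [a1 [eps [b0 [b1 [L [h
    [Heps [Hsep [HL [Hb0l [Hb1l [Hb0 [Hb1 [Hn0 Hn1]]]]]]]]]]]]]]]].
  exact (scrambled_set_properties l0 Hl0 dl a0 a1 eps b0 b1 L h Heps Hsep HL Hb0l Hb1l Hb0 Hb1 Hn0 Hn1 Hpi_surj).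
Qed.

End Factor.
End Language.
End Coordinates.

Open Scope R_scope.

(** The theorem: instantiate the development with the coordinates of the
    one- or two-sided index set. *)
Theorem theorem4p11
  (b : bool) (A : Type) (HA : exists l : list A, forall a, In a l)
  (X : config (sys_of b) A -> Prop)
  (HXinf : infinite_set (sys_of b) A X)
  (HXmix : mixing (sys_of b) A X)
  (HXsync : synchronizing_subshift (sys_of b) A X)
  (Y : Type) (d : Y -> Y -> R) (HY : compact_metric_space Y d)
  (g : Y -> Y) (Hg : continuous_map Y d g)
  (pi : config (sys_of b) A -> Y)
  (Hpi_cont : forall x eps, X x -> 0 < eps -> exists m, forall y, X y ->
                 agree m x y -> d (pi x) (pi y) < eps)
  (Hpi_surj : forall y, exists x, X x /\ pi x = y)
  (Hpi_eqv : forall x, X x -> pi (sshift x) = g (pi x))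
  (Hpi_fib : forall y, exists f : nat -> config (sys_of b) A,
                forall x, X x -> pi x = y -> exists n, f n = x) :
  exists (eps : R) (k : nat) (T : Y -> Prop),
    0 < eps /\ (1 <= k)%nat /\
    dense Y d T /\ mycielski Y d T /\
    (forall y, T y -> T (Nat.iter k g y)) /\
    synd_scrambled Y d g eps T.
Proof.
  destruct HXsync as [HXsub [_ [s Hs]]].
  exact (factor_has_scrambled_set (sys_of b) (coords_of b) A X HXsub HXmix s Hs Y d (proj1 HY) g pi
           Hpi_cont Hpi_eqv HXinf Hpi_fib HA Hpi_surj).
Qed.
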